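(* Let $n$ be a positive integer that is not a power of $2$, let $A$ be an abelian group of order $n$ and let $m$ be the number of elements of $A$ of order at most $2$. Then the number of inverse-closed subsets $S\subseteq A$ for which there exist subgroups $H,K$ with $1<H\leq K<A$ such that $S\setminus K$ is a union of $H$-cosets is at most $2^{m/2+11n/24+2(\log_2 n)^2}$.
   Context: A subset $S$ of a group is inverse-closed if $S^{-1}=S$. *)

From Stdlib Require Import Reals.
From HB Require Import structures.
From mathcomp Require Import all_boot all_order all_fingroup.
Set Implicit Arguments. Unset Strict Implicit. Unset Printing Implicit Defensive.

Local Open Scope R_scope.
Definition cayley_bound (m n : nat) : R :=
  Rpower 2 (INR m / 2 + 11 * INR n / 24 + 2 * (ln (INR n) / ln 2) ^ 2).

From Stdlib Require Import Reals Lra.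
From HB Require Import structures.
From mathcomp Require Import all_boot all_order all_fingroup cyclic pgroup zify.

Set Implicit Arguments. Unset Strict Implicit. Unset Printing Implicit Defensive.

(* An inverse-closed S <= A such that
   S \ K is a union of H-cosets is determined by its trace on a half of K
   (one element of each orbit {x, x^-1}) and by which members of a half of
   the H-cosets outside K it contains.  Counting inversion orbits, these
   halves have (|K| + m_K)/2 and (N + c)/2 elements, where m_K counts the
   involutions of K, N the H-cosets outside K and c the self-inverse ones.
   The bounds N|H| + |K| <= n, c|H| + m_K <= |H| m (square roots), 3m <= n
   (the involutions form a proper 2-subgroup of index at least 3),
   2|K| <= n and |H| >= 2 then give at most 2^((12m + 11n)/24) sets for each
   pair (H, K).  Since every subgroup of A is generated by at most log2 n
   elements, A has at most n^(log2 n) subgroups; a union bound over the pairs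
   and an estimate in the reals give the theorem [lemma5p4]. *)

Lemma card_bigcup_le (I T : finType) (P : pred I) (F : I -> {set T}) :
  #|\bigcup_(i | P i) F i| <= \sum_(i | P i) #|F i|.
Proof.
apply: (big_ind2 (fun (X : {set T}) s => #|X| <= s)) => [|X1 s1 X2 s2 h1 h2|//].
  by rewrite cards0.
by rewrite (leq_trans (leq_card_setU _ _)) ?leq_add.
Qed.

(* A half of an f-stable set Y, for an involution f: keep x when its rank
   does not exceed that of f x, so that every f-orbit in Y is met. *)
Section InvolutionHalf.
Variables (T : finType) (f : T -> T).
Hypothesis fK : involutive f.

Definition orbit_half (Y : {set T}) :=
  [set x in Y | enum_rank x <= enum_rank (f x)].

Lemma eq_on_half (Y : {set T}) (p q : pred T) : {in Y, forall x, f x \in Y} ->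
  {in Y, forall x, p (f x) = p x} -> {in Y, forall x, q (f x) = q x} ->
  {in orbit_half Y, p =1 q} -> forall x, x \in Y -> p x = q x.
Proof.
move=> fY pf qf eqpq x xY.
have: (x \in orbit_half Y) || (f x \in orbit_half Y).
  by rewrite !inE xY fY // fK leq_total.
by case/orP=> [/eqpq //|/eqpq]; rewrite pf // qf.
Qed.

Lemma card_half (Y : {set T}) : {in Y, forall x, f x \in Y} ->
  (#|orbit_half Y|).*2 = #|Y| + #|[set x in Y | f x == x]|.
Proof.
move=> fY; have injf : injective f := can_inj fK.
rewrite -addnn -{2}(card_imset (orbit_half Y) injf) -cardsUI (can_imset_pre _ fK).
congr (_ + _); apply: eq_card => x; rewrite !inE fK.
- apply/idP/idP => [/orP[] /andP[] // fxY _|xY]; first by rewrite -[x]fK fY.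
  by rewrite xY fY //= leq_total.
- apply/idP/idP => [/andP[/andP[xY le1] /andP[_ le2]]|/andP[xY /eqP ->]].
    rewrite xY; apply/eqP/enum_rank_inj/val_inj/eqP; by rewrite eqn_leq le1 le2.
  by rewrite xY leqnn.
Qed.
End InvolutionHalf.

Section OrderTwo.
Local Open Scope group_scope.
Variable gT : finGroupType.
Implicit Types (x : gT) (A : {group gT}).

Lemma order_le2E x : (#[x] <= 2)%N = (x ^+ 2 == 1).
Proof.
rewrite -order_dvdn; apply/idP/idP; last exact: dvdn_leq.
by have := order_gt0 x; case: #[x] => [|[|[|]]].
Qed.

Lemma invg_fixE x : (x^-1 == x) = (x ^+ 2 == 1).
Proof. by rewrite expgS expg1 -eq_invg_mul eq_sym. Qed.

(* The elements of A of order at most 2 (the identity included). *)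
Definition involutions A := [set x in A | (#[x] <= 2)%N].
End OrderTwo.

Section AbelianInvolutions.
Local Open Scope group_scope.
Variables (gT : finGroupType) (A : {group gT}).
Hypothesis abA : abelian A.

Lemma involutions_group_set : group_set (involutions A).
Proof.
apply/group_setP; split=> [|x y].
  by rewrite inE order_le2E expg1n eqxx andbT.
rewrite !inE !order_le2E => /andP[xA /eqP x2] /andP[yA /eqP y2].
by rewrite groupM //= expgMn ?x2 ?y2 ?mulg1 //; apply: (centsP abA).
Qed.
Canonical involutions_group := group involutions_group_set.

(* The squaring map is a homomorphism of A with kernel the involutions, so
   each of its fibers is a coset of the involutions, or empty. *)
Lemma card_square_fiber (y : gT) :
  #|[set x in A | x ^+ 2 == y]| <= #|involutions A|.
Proof.
have [-> | [x0]] := set_0Vmem [set x in A | x ^+ 2 == y].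
  by rewrite cards0.
rewrite inE => /andP[x0A /eqP x0y].
rewrite -(card_imset _ (mulgI x0^-1)); apply/subset_leq_card/subsetP => z.
case/imsetP => x; rewrite inE => /andP[xA /eqP xy] ->.
rewrite inE groupM ?groupV //= order_le2E expgMn ?expVgn ?x0y ?xy ?mulVg //.
by apply/commute_sym/commuteV/commute_sym/(centsP abA).
Qed.

Lemma card_square_preimage (Y : {set gT}) :
  #|[set x in A | x ^+ 2 \in Y]| <= #|Y| * #|involutions A|.
Proof.
have -> : [set x in A | x ^+ 2 \in Y] =
           \bigcup_(y in Y) [set x in A | x ^+ 2 == y].
  apply/setP => x; rewrite inE; apply/andP/bigcupP => [[xA xY]|[y yY]].
    by exists (x ^+ 2); rewrite // inE xA /=.
  by rewrite inE => /andP[-> /eqP ->].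
rewrite -sum_nat_const; apply: leq_trans (card_bigcup_le _ _) _.
by apply: leq_sum => y _; apply: card_square_fiber.
Qed.

(* The involutions form a 2-subgroup (Cauchy), so unless |A| is a power of 2
   their index in A is at least 3. *)
Lemma three_involutions_le : ~ (exists k, #|A| = 2 ^ k)%N ->
  (3 * #|involutions A| <= #|A|)%N.
Proof.
move=> not_pow2.
have sOA : involutions A \subset A by apply/subsetP => x; rewrite inE => /andP[].
have two_group : 2.-nat #|involutions A|.
  apply/pnatP => // p p_pr p_dvd.
  have [x xO ox] := Cauchy p_pr p_dvd.
  move: xO; rewrite inE ox => /andP[_ p_le2].
  by case: p p_pr {p_dvd ox} p_le2 => [|[|[|]]].
have [j ej] := p_natP two_group.
have /dvdnP[q eq] := cardSg sOA.
rewrite eq ej in not_pow2 *.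
case: q eq not_pow2 => [|[|[|q]]] eq not_pow2.
- by have := cardG_gt0 A; rewrite eq.
- by case: not_pow2; exists j; rewrite mul1n.
- by case: not_pow2; exists j.+1; rewrite expnS.
- exact: leq_mul.
Qed.
End AbelianInvolutions.

Section CosetFamily.
Local Open Scope group_scope.
Variables (gT : finGroupType) (A H K : {group gT}).
Hypotheses (abA : abelian A) (sHK : H \subset K) (sKA : K \subset A).

Let sHA : H \subset A := subset_trans sHK sKA.

Definition outer_cosets := [set X in rcosets H A | X :&: K == set0].

Definition coset_family := [set S : {set gT} | [&& S \subset A, S^-1 == S &
  [exists P : {set {set gT}}, (P \subset rcosets H A) && (S :\: K == cover P)]]].

Lemma rcoset_outer x : x \in A -> x \notin K -> H :* x \in outer_cosets.
Proof.
move=> xA xK; rewrite inE mem_rcosets mulSGid // xA /=.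
apply/eqP/setP => y; rewrite !inE mem_rcoset; apply/andP => -[yx yK].
have := groupM (groupVr (subsetP sHK _ yx)) yK.
by rewrite invMg invgK mulgKV (negbTE xK).
Qed.

Lemma outer_coset_notin X x : X \in outer_cosets -> x \in X -> x \notin K.
Proof.
rewrite inE => /andP[_ /eqP XK0] xX; apply/negP => xK.
have : x \in X :&: K by rewrite inE xX.
by rewrite XK0 inE.
Qed.

Lemma invg_rcoset_abelian x : x \in A -> (H :* x)^-1 = H :* x^-1.
Proof.
move=> xA; rewrite invg_rcoset norm_rlcoset //.
by rewrite (subsetP (sub_abelian_norm abA sHA)) ?groupV.
Qed.

Lemma outer_cosets_invg X : X \in outer_cosets -> X^-1 \in outer_cosets.
Proof.
move=> XO; have /rcosetsP[x xA eX] : X \in rcosets H A by case/setIdP: XO.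
have xK : x \notin K by apply: outer_coset_notin XO _; rewrite eX rcoset_refl.
by rewrite eX invg_rcoset_abelian // rcoset_outer ?groupV.
Qed.

Lemma coset_family_outside S x : S \in coset_family -> x \in A -> x \notin K ->
  (x \in S) = (H :* x \subset S).
Proof.
rewrite inE => /and3P[_ _ /existsP[P /andP[sPR /eqP eS]]] xA xK.
apply/idP/idP => [xS|/subsetP]; last by apply; apply: rcoset_refl.
have : x \in S :\: K by rewrite inE xK.
rewrite eS => /bigcupP[Y YP xY].
have /rcosetsP[y yA eY] := subsetP sPR Y YP.
have -> : H :* x = Y by rewrite eY; apply/rcoset_eqP; rewrite -eY.
by apply: subset_trans (bigcup_sup Y YP) _; rewrite -/(cover P) -eS subsetDl.
Qed.

Lemma coset_family_invg S x : S \in coset_family -> (x^-1 \in S) = (x \in S).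
Proof. by rewrite inE => /and3P[_ /eqP eS _]; rewrite -{1}eS mem_invg invgK. Qed.

Definition coset_trace (S : {set gT}) :=
  (S :&: orbit_half inv K, [set X in orbit_half inv outer_cosets | X \subset S]).

Lemma coset_trace_inj : {in coset_family &, injective coset_trace}.
Proof.
move=> S S' FS FS' [eK eO]; apply/setP => x.
have sSA : S \subset A by move: FS; rewrite inE => /and3P[].
have sSA' : S' \subset A by move: FS'; rewrite inE => /and3P[].
have [xA|xA] := boolP (x \in A); last first.
  by apply/idP/idP => [/(subsetP sSA)|/(subsetP sSA')]; rewrite (negbTE xA).
have [xK|xK] := boolP (x \in K).
  have invK : {in K, forall y, y^-1 \in K} by move=> y; rewrite groupV.
  apply: (eq_on_half invgK invK _ _ _ xK) => [y _|y _|y hy].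
  - exact: coset_family_invg.
  - exact: coset_family_invg.
  have := congr1 (fun Z : {set gT} => y \in Z) eK.
  by move: hy; rewrite /= !inE => /andP[-> ->]; rewrite !andbT.
have inv_sub R : R \in coset_family ->
    forall X : {set gT}, (X^-1 \subset R) = (X \subset R).
  by rewrite inE => /and3P[_ /eqP eR _] X; rewrite -{1}eR invSg.
rewrite (coset_family_outside FS) // (coset_family_outside FS') //.
apply: (@eq_on_half {set gT} _ invgK _ (fun X => X \subset S)
  (fun X => X \subset S') outer_cosets_invg _ _ _ _ (rcoset_outer xA xK)).
- by move=> X _; apply: inv_sub.
- by move=> X _; apply: inv_sub.
move=> X hX; have := congr1 (fun Z : {set {set gT}} => X \in Z) eO.
by move: hX; rewrite /= !inE => /andP[-> ->].
Qed.

Lemma card_coset_family :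
  (#|coset_family|
     <= 2 ^ (#|orbit_half inv K| + #|orbit_half inv outer_cosets|))%N.
Proof.
rewrite -(card_in_imset coset_trace_inj) expnD -!card_powerset -cardsX.
apply/subset_leq_card/subsetP => _ /imsetP[S _ ->].
by rewrite !inE subsetIr; apply/subsetP => X; rewrite inE => /andP[].
Qed.

Lemma outer_coset_sub X : X \in outer_cosets -> X \subset A :\: K.
Proof.
move=> XO; have /rcosetsP[x xA eX] : X \in rcosets H A by case/setIdP: XO.
apply/subsetP => y yX; rewrite inE (outer_coset_notin XO yX).
by move: yX; rewrite eX => /rcosetP[h hH ->]; rewrite groupM // (subsetP sHA).
Qed.

Lemma card_cover_outer (P : {set {set gT}}) :
  P \subset outer_cosets -> #|cover P| = (#|P| * #|H|)%N.
Proof.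
move=> sPO; have sPR : P \subset rcosets H A.
  by apply: subset_trans sPO _; apply/subsetP => X /setIdP[].
apply: card_uniform_partition.
  by move=> X /(subsetP sPR) /rcosetsP[x _ ->]; rewrite card_rcoset.
apply/and3P; split=> //.
  exact: trivIsetS sPR (partition_trivIset (rcosets_partition sHA)).
apply/negP => /(subsetP sPR) /rcosetsP[x _ e].
by have := rcoset_refl H x; rewrite -e inE.
Qed.

Lemma card_outer_cosets : (#|outer_cosets| * #|H| + #|K| <= #|A|)%N.
Proof.
rewrite -card_cover_outer // -(cardsID K A) (setIidPr sKA) addnC leq_add2l.
apply/subset_leq_card/subsetP => x /bigcupP[X XO xX].
exact: subsetP (outer_coset_sub XO) x xX.
Qed.

(* Self-inverse outer cosets and involutions of K consist of elements whose
   square lies in H; they are disjoint, hence the count by square roots. *)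
Lemma card_selfinv_outer :
  (#|[set X in outer_cosets | X^-1 == X]| * #|H| + #|[set x in K | x^-1 == x]|
    <= #|H| * #|involutions A|)%N.
Proof.
set P := [set X in outer_cosets | X^-1 == X].
have sPO : P \subset outer_cosets by apply/subsetP => X /setIdP[].
rewrite -card_cover_outer //.
apply: leq_trans (card_square_preimage abA H); rewrite -cardsUI.
have -> : cover P :&: [set x in K | x^-1 == x] = set0.
  apply/setP => x; rewrite !inE; apply/andP => -[/bigcupP[X XP xX] /andP[xK _]].
  by move: (outer_coset_notin (subsetP sPO X XP) xX); rewrite xK.
rewrite cards0 addn0; apply/subset_leq_card/subsetP => x; rewrite inE.
case/orP => [/bigcupP[X XP xX]|].
  have /setIdP[XO /eqP XV] := XP.
  have /rcosetsP[y yA eX] : X \in rcosets H A by case/setIdP: XO.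
  have xA : x \in A by have := subsetP (outer_coset_sub XO) x xX; case/setDP.
  have : x^-1 \in X by rewrite -XV mem_invg invgK.
  rewrite eX -(rcoset_eqP (_ : x \in H :* y)) -?eX // mem_rcoset => x2H.
  by rewrite inE xA -[x ^+ 2]invgK -expVgn groupV expgS expg1.
rewrite inE invg_fixE => /andP[xK /eqP x2].
by rewrite inE (subsetP sKA) // x2 group1.
Qed.
End CosetFamily.

(* The arithmetic core of the per-pair bound: r1, r2 are the sizes of the two
   halves, the hypotheses the counting facts listed in the introduction. *)
Lemma exponent_arith (r1 r2 k mK N c h m n : nat) :
  r1.*2 = k + mK -> r2.*2 = N + c -> c <= N -> mK <= m ->
  N * h + k <= n -> c * h + mK <= h * m ->
  2 <= h -> 2 * k <= n -> 3 * m <= n ->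
  24 * (r1 + r2) <= 12 * m + 11 * n.
Proof.
rewrite -!muln2 => e1 e2 cN mKm Nk cmK h2 k2 m3.
have [h_eq2|h3] := eqVneq h 2; first by rewrite h_eq2 in Nk cmK; lia.
have : 3 * N <= h * N by rewrite leq_mul2r; lia.
nia.
Qed.

Lemma card_proper_subgroup (gT : finGroupType) (G K : {group gT}) :
  K \proper G -> (2 * #|K| <= #|G|)%N.
Proof.
case/andP=> sKG nsGK; rewrite -(Lagrange sKG) mulnC leq_mul2l.
by rewrite indexg_gt1 nsGK orbT.
Qed.

Section CosetFamilyBound.
Local Open Scope group_scope.
Variables (gT : finGroupType) (A H K : {group gT}).
Hypotheses (abA : abelian A) (not_pow2 : ~ (exists k, #|A| = 2 ^ k)%N).
Hypotheses (ntH : 1%G \proper H) (sHK : H \subset K) (pKA : K \proper A).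

Lemma coset_family_exponent :
  (24 * (#|orbit_half inv K| + #|orbit_half inv (outer_cosets A H K)|)
     <= 12 * #|involutions A| + 11 * #|A|)%N.
Proof.
have sKA := proper_sub pKA.
apply: (exponent_arith (card_half invgK (fun x => @groupVr _ K x))
                       (card_half invgK (outer_cosets_invg abA sHK sKA))).
- by apply/subset_leq_card/subsetP => X /setIdP[].
- apply/subset_leq_card/subsetP => x; rewrite !inE invg_fixE order_le2E.
  by case/andP=> xK ->; rewrite (subsetP sKA).
- exact: card_outer_cosets.
- exact: card_selfinv_outer.
- by move/proper_card: ntH; rewrite cards1.
- exact: card_proper_subgroup.
- exact: three_involutions_le.
Qed.

Lemma card_coset_family_exponent :
  (#|coset_family A H K| <= 2 ^ ((12 * #|involutions A| + 11 * #|A|) %/ 24))%N.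
Proof.
apply: leq_trans (card_coset_family abA sHK (proper_sub pKA)) _.
by rewrite leq_exp2l // leq_divRL // mulnC coset_family_exponent.
Qed.
End CosetFamilyBound.

Section Subgroups.
Local Open Scope group_scope.
Variable gT : finGroupType.
Implicit Types (s : seq gT) (G : {group gT}).

Lemma card_gen_cons s x : x \notin <<[set:: s]>> ->
  (2 * #|<<[set:: s]>>| <= #|<<[set:: x :: s]>>|)%N.
Proof.
move=> xn; apply: card_proper_subgroup; rewrite properEneq genS; last first.
  by apply/subsetP => y; rewrite !inE => ->; rewrite orbT.
rewrite andbT; apply: contraNneq xn => ->.
by rewrite mem_gen // !inE eqxx.
Qed.

Lemma short_generating_seq G : exists s,
  [/\ {subset s <= G}, (2 ^ size s <= #|G|)%N & <<[set:: s]>> = G].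
Proof.
suff grow k s : {subset s <= G} -> (2 ^ size s <= #|<<[set:: s]>>|)%N ->
    (#|G| - #|<<[set:: s]>>| <= k)%N -> exists t,
    [/\ {subset t <= G}, (2 ^ size t <= #|G|)%N & <<[set:: t]>> = G].
  by apply: (grow #|G| [::]) => //; rewrite ?leq_subr ?cardG_gt0.
have gen_sub t : {subset t <= G} -> <<[set:: t]>> \subset G.
  by move=> tG; rewrite gen_subG; apply/subsetP => y; rewrite inE => /tG.
have done_if t : {subset t <= G} -> (2 ^ size t <= #|<<[set:: t]>>|)%N ->
    (#|G| <= #|<<[set:: t]>>|)%N -> exists u,
    [/\ {subset u <= G}, (2 ^ size u <= #|G|)%N & <<[set:: u]>> = G].
  move=> tG c2 le; have eG : <<[set:: t]>> = G.
    by apply/eqP; rewrite eqEcard gen_sub.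
  by exists t; rewrite -{2}eG.
elim: k s => [|k IH] s sG c2 le.
  by apply: (done_if s sG c2); move: le; rewrite leqn0 subn_eq0.
have [le'|nsG] := boolP (#|G| <= #|<<[set:: s]>>|)%N.
  exact: (done_if s sG c2 le').
have /subsetPn[x xG xn] : ~~ (G \subset <<[set:: s]>>).
  by apply: contra nsG => /subset_leq_card.
have xsG : {subset x :: s <= G} by move=> y; rewrite inE => /predU1P[->|/sG].
have grow2 := card_gen_cons xn.
apply: (IH (x :: s)) => //; first by rewrite expnS (leq_trans _ grow2) ?leq_mul2l.
move: le grow2 (cardG_gt0 <<[set:: s]>>) (subset_leq_card (gen_sub _ xsG)).
set a := #|<<[set:: s]>>|; set b := #|<<[set:: x :: s]>>|; lia.
Qed.

(* Every subgroup of A is generated by the values of a function from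
   'I_(log2 |A|) to A (padding with 1), so there are few subgroups. *)
Lemma card_subgroups_le (A : {group gT}) :
  (#|[set G : {group gT} | G \subset A]| <= #|A| ^ trunc_log 2 #|A|)%N.
Proof.
set L := trunc_log 2 #|A|.
pose gen_by (f : {ffun 'I_L -> gT}) := <<[set f i | i : 'I_L]>>%G.
have -> : (#|A| ^ L)%N = #|ffun_on_mem 'I_L (mem A)|.
  by rewrite card_ffun_on card_ord.
apply: leq_trans (leq_imset_card gen_by _); apply/subset_leq_card/subsetP => G.
rewrite inE => sGA; have [s [sG c2 eG]] := short_generating_seq G.
have sL : (size s <= L)%N.
  by apply: trunc_log_max => //; apply: leq_trans c2 (subset_leq_card sGA).
pose f := [ffun i : 'I_L => nth 1 s i].
have fs i : f i \in 1 |: [set:: s].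
  rewrite ffunE !inE; case: (ltnP i (size s)) => hi; first by rewrite mem_nth ?orbT.
  by rewrite nth_default ?eqxx.
apply/imsetP; exists f.
  apply/ffun_onP => i; have := fs i.
  by rewrite !inE => /predU1P[->|/sG/(subsetP sGA)].
apply: val_inj; rewrite /= -eG; apply/eqP; rewrite eqEsubset !gen_subG.
apply/andP; split; apply/subsetP => y.
  rewrite inE => ys; apply: mem_gen; apply/imsetP.
  have ys' : (index y s < size s)%N by rewrite index_mem.
  exists (Ordinal (leq_trans ys' sL)) => //.
  by rewrite ffunE nth_index.
case/imsetP => i _ ->; case/setU1P: (fs i) => [->|fi].
  exact: group1.
by rewrite mem_gen.
Qed.
End Subgroups.

Section AdmissibleSets.
Local Open Scope group_scope.
Variables (gT : finGroupType) (A : {group gT}).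
Hypotheses (abA : abelian A) (not_pow2 : ~ (exists k, #|A| = 2 ^ k)%N).

Definition admissible_sets := [set S : {set gT} | (S \subset A) &&
  [exists H : {group gT}, [exists K : {group gT},
    [&& 1%G \proper H, H \subset K, K \proper A, S^-1 == S &
      [exists P : {set {set gT}},
        (P \subset rcosets H A) && (S :\: K == cover P)]]]]].

(* Union bound over the admissible pairs (H, K), of which there are at most
   (#subgroups)^2, each contributing one coset family. *)
Lemma card_admissible_sets :
  (#|admissible_sets| <= (#|A| ^ trunc_log 2 #|A|) ^ 2
                         * 2 ^ ((12 * #|involutions A| + 11 * #|A|) %/ 24))%N.
Proof.
set b := (_ %/ 24)%N.
set pairs := [set HK : {group gT} * {group gT} |
  [&& 1%G \proper HK.1, HK.1 \subset HK.2 & HK.2 \proper A]].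
have cover_sets : admissible_sets \subset
    \bigcup_(HK in pairs) coset_family A HK.1 HK.2.
  apply/subsetP => S; rewrite inE => /andP[sSA /existsP[H /existsP[K]]].
  case/and5P => ntH sHK pKA SV eS; apply/bigcupP; exists (H, K).
    by rewrite inE /= ntH sHK pKA.
  by rewrite inE sSA SV.
have card_pairs : (#|pairs| <= (#|A| ^ trunc_log 2 #|A|) ^ 2)%N.
  apply: leq_trans (leq_mul (card_subgroups_le A) (card_subgroups_le A)).
  rewrite -cardsX; apply/subset_leq_card/subsetP => -[H K].
  rewrite inE => /and3P[_ sHK pKA]; have sKA := proper_sub pKA.
  by rewrite !inE /= sKA (subset_trans sHK sKA).
apply: leq_trans (subset_leq_card cover_sets) _.
apply: leq_trans (card_bigcup_le _ _) _.
apply: leq_trans (leq_mul card_pairs (leqnn (2 ^ b))); rewrite -sum_nat_const.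
apply: leq_sum => -[H K]; rewrite inE => /and3P[ntH sHK pKA].
exact: card_coset_family_exponent.
Qed.
End AdmissibleSets.

Section RealBound.
Local Open Scope R_scope.

Lemma INR_expn (a k : nat) : INR (a ^ k)%N = INR a ^ k.
Proof. by elim: k => [|k IH] //=; rewrite expnS mult_INR IH. Qed.

Lemma Rpower_log2 (x : R) : 0 < x -> Rpower 2 (ln x / ln 2) = x.
Proof.
move=> x_gt0; have ln2_gt0 : 0 < ln 2 by have := ln_lt_2; lra.
rewrite /Rpower; replace (ln x / ln 2 * ln 2) with (ln x) by (field; lra).
exact: exp_ln.
Qed.

Lemma pow_le_Rpower_log2_sq (n L : nat) : (0 < n)%N -> (2 ^ L <= n)%N ->
  INR n ^ L <= Rpower 2 ((ln (INR n) / ln 2) ^ 2).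
Proof.
move=> n_gt0 pow2_le; set l := ln (INR n) / ln 2.
have n_pos : 0 < INR n by apply/lt_0_INR/ltP.
have L_le : INR L <= l.
  apply: Rnot_lt_le => lt_lL.
  have := Rpower_lt 2 _ _ ltac:(lra) lt_lL; rewrite Rpower_log2 // Rpower_pow; last lra.
  have : INR (2 ^ L) <= INR n by apply/le_INR/leP.
  by rewrite INR_expn (_ : INR 2 = 2) //; lra.
rewrite -Rpower_pow // -{1}(Rpower_log2 n_pos) -/l Rpower_mult.
apply: Rle_Rpower; first lra.
by rewrite /= Rmult_1_r; apply: Rmult_le_compat_l => //; have := pos_INR L; lra.
Qed.

Lemma cayley_bound_ge (m n L b : nat) : (0 < n)%N -> (2 ^ L <= n)%N ->
  (b * 24 <= 12 * m + 11 * n)%N ->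
  INR ((n ^ L) ^ 2 * 2 ^ b) <= cayley_bound m n.
Proof.
move=> n_gt0 pow2_le b_le; set l := ln (INR n) / ln 2.
have nL := pow_le_Rpower_log2_sq n_gt0 pow2_le.
have e2 : 2 ^ b <= Rpower 2 (INR m / 2 + 11 * INR n / 24).
  rewrite -Rpower_pow; last lra.
  apply: Rle_Rpower; first lra.
  have : INR (b * 24) <= INR (12 * m + 11 * n) by apply/le_INR/leP.
  by rewrite plus_INR !mult_INR /=; lra.
have nL_pos : 0 <= INR n ^ L by apply: pow_le; apply: pos_INR.
have sq : (INR n ^ L) ^ 2 <= Rpower 2 (l ^ 2) * Rpower 2 (l ^ 2).
  by rewrite /= Rmult_1_r; apply: Rmult_le_compat.
rewrite /cayley_bound mult_INR !INR_expn (_ : INR 2 = 2) // -/l.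
replace (INR m / 2 + 11 * INR n / 24 + 2 * l ^ 2)
  with ((INR m / 2 + 11 * INR n / 24) + (l ^ 2 + l ^ 2)) by ring.
rewrite Rpower_plus (Rpower_plus (l ^ 2)) Rmult_comm.
by apply: Rmult_le_compat => //; apply: pow_le; lra.
Qed.
End RealBound.

Theorem lemma5p4 (gT : finGroupType) (A : {group gT}) (n : nat)
  (hA : abelian A) (hn : #|A| = n) (hn0 : (0 < n)%N)
  (hnp : ~ (exists k : nat, n = (2 ^ k)%N)) :
  Rle
    (INR #|[set S : {set gT} | (S \subset A) &&
      [exists H : {group gT}, [exists K : {group gT},
        [&& (1%G \proper H)%g, (H \subset K), (K \proper A),
            ((S^-1)%g == S) &
            [exists P : {set {set gT}},
               (P \subset rcosets H A) && (S :\: K == cover P)]]]]]|)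
    (cayley_bound #|[set x in A | (#[x]%g <= 2)%N]| n).
Proof.
have not_pow2 : ~ (exists k, #|A| = 2 ^ k)%N by rewrite hn.
have card_le := card_admissible_sets hA not_pow2; rewrite hn in card_le.
have two_pow_le := trunc_logP (isT : (1 < 2)%N) hn0.
apply: Rle_trans (cayley_bound_ge hn0 two_pow_le (leq_divM _ _)).
exact/le_INR/leP.
Qed.
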